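(* For all histories $\vec\delta,\vec\gamma,\vec\delta',\vec\gamma'$ and all $\rho,\sigma$: if $\langle\vec\delta,\rho\rangle$ is compliant with $\langle\vec\gamma,\sigma\rangle$, then $\langle\vec\delta':\vec\delta,\rho\rangle$ is compliant with $\langle\vec\gamma':\vec\gamma,\sigma\rangle$, where $\vec\delta':\vec\delta$ denotes the stack obtained by placing $\vec\delta$ on top of $\vec\delta'$ (concatenation with $\vec\delta'$ at the bottom), and similarly for $\vec\gamma':\vec\gamma$.
   Context: Let $\mathcal N$ be a countable set of names and $\overline{\mathcal N}=\{\bar a\mid a\in\mathcal N\}$ a disjoint set of conames; $\alpha$ ranges over $\mathcal N\cup\overline{\mathcal N}$, with $\bar{\bar a}=a$. Retractable contracts are the closed expressions generated by $\sigma ::= \mathbf 1 \mid \sum_{i\in I} a_i.\sigma_i \ (\text{input}) \mid \sum_{i\in I}\bar a_i.\sigma_i\ (\text{retractable output}) \mid \bigoplus_{i\in I}\bar a_i.\sigma_i\ (\text{unretractable output}) \mid x \mid \mathsf{rec}\,x.\sigma$, where $I$ is non-empty and finite, names/conames in each choice are pairwise distinct, and $\sigma$ is not a variable in $\mathsf{rec}\,x.\sigma$. Choices are commutative; $\mathsf{rec}\,x.\sigma$ is identified with $\sigma[\mathsf{rec}\,x.\sigma/x]$. A unary $\bar a.\sigma$ may be read as either kind of output. Histories are stacks $\vec\gamma ::= [\,] \mid \vec\gamma:\sigma$ with $\sigma$ a retractable contract or the special symbol $\circ$ (the last element pushed is the top). A contract with history is a pair $\langle\vec\gamma,\sigma\rangle$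 with $\sigma$ a contract or $\circ$. Transitions: $\langle\vec\gamma,\alpha.\sigma+\sigma'\rangle\xrightarrow{\alpha}\langle\vec\gamma:\sigma',\sigma\rangle$ (for retractable choices, $+$ being input or retractable output sum); $\langle\vec\gamma,\bar a.\sigma\oplus\sigma'\rangle\xrightarrow{\tau}\langle\vec\gamma,\bar a.\sigma\rangle$; $\langle\vec\gamma,\alpha.\sigma\rangle\xrightarrow{\alpha}\langle\vec\gamma:\circ,\sigma\rangle$; $\langle\vec\gamma:\sigma',\sigma\rangle\xrightarrow{\mathsf{rb}}\langle\vec\gamma,\sigma'\rangle$. Client/server pairs $\langle\vec\delta,\rho\rangle\parallel\langle\vec\gamma,\sigma\rangle$ reduce by: (comm) if $\langle\vec\delta,\rho\rangle\xrightarrow{\alpha}\langle\vec\delta',\rho'\rangle$ and $\langle\vec\gamma,\sigma\rangle\xrightarrow{\bar\alpha}\langle\vec\gamma',\sigma'\rangle$ then the pair reduces to $\langle\vec\delta',\rho'\rangle\parallel\langle\vec\gamma',\sigma'\rangle$; ($\tau$) a $\tau$-transition of either component alone; (rbk) if both components do an $\mathsf{rb}$ transition and $\rho\neq\mathbf 1$, both roll back simultaneously; rule (rbk) applies only if neither (comm) nor ($\tau$) applies. Then $\langle\vec\delta,\rho\rangle$ is compliant with $\langle\vec\gamma,\sigma\rangle$ if whenever $\langle\vec\delta,\rho\rangle\parallel\langle\vec\gamma,\sigma\rangle$ reduces in finitely many steps to a pair $\langle\vec\delta'',\rho'\rangle\parallel\langle\vec\gamma'',\sigma'\rangle$ with no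 further reduction, we have $\rho'=\mathbf 1$. *)

From Stdlib Require Import Relations.
From mathcomp Require Import all_boot.
Set Implicit Arguments. Unset Strict Implicit. Unset Printing Implicit Defensive.

(* Retractable contracts, with de Bruijn
   variables: CRec s binds index 0 in s.  A choice is a finite list of
   (name, continuation) pairs; commutativity of choices is handled by
   letting transitions pick any element of the list. *)
Inductive contract : Type :=
| CEnd
| CInp  of seq (nat * contract)
| CROut of seq (nat * contract)     (* sum_i abar_i.s_i  (retractable) *)
| CUOut of seq (nat * contract)     (* (+)_i abar_i.s_i (unretractable) *)
| CVar  of nat
| CRec  of contract.

Fixpoint wf_at (k : nat) (t : contract) : bool :=
  match t with
  | CEnd => true
  | CInp l | CROut l | CUOut l =>
      [&& 0 < size l, uniq (map fst l) & all (fun p => wf_at k p.2) l]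
  | CVar n => n < k
  | CRec s => (if s is CVar _ then false else true) && wf_at k.+1 s
  end.

Definition wf (t : contract) : bool := wf_at 0 t.

(* None stands for the special symbol \circ *)
Definition wf_opt (t : option contract) : bool :=
  if t is Some c then wf c else true.

(* Histories: the head of the list is the TOP of the stack (last pushed). *)
Definition history := seq (option contract).
Definition wf_hist (h : history) : bool := all wf_opt h.

(* substitution of a closed term u for index k *)
Fixpoint subst (k : nat) (u : contract) (t : contract) : contract :=
  match t with
  | CEnd => CEnd
  | CInp l => CInp (map (fun p => (p.1, subst k u p.2)) l)
  | CROut l => CROut (map (fun p => (p.1, subst k u p.2)) l)
  | CUOut l => CUOut (map (fun p => (p.1, subst k u p.2)) l)
  | CVar n => if n == k then u else if k < n then CVar n.-1 else CVar n
  | CRec s => CRec (subst k.+1 u s)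
  end.

(* rec x.s is identified with s[rec x.s/x] *)
Definition unfold_rec (s : contract) : contract := subst 0 (CRec s) s.

Inductive is_one : contract -> Prop :=
| one_end : is_one CEnd
| one_rec s : is_one (unfold_rec s) -> is_one (CRec s).

Definition is_one_opt (t : option contract) : Prop :=
  if t is Some c then is_one c else False.

Inductive act : Type := AIn of nat | AOut of nat | ATau | ARb.

Definition dual (x : act) : act :=
  match x with AIn a => AOut a | AOut a => AIn a | y => y end.

Definition is_io (x : act) : Prop :=
  match x with AIn _ | AOut _ => True | _ => False end.

Inductive ctrans : history -> option contract -> act ->
                   history -> option contract -> Prop :=
| tr_inp h l1 a s l2 : l1 ++ l2 <> [::] ->
    ctrans h (Some (CInp (l1 ++ (a, s) :: l2))) (AIn a)
           (Some (CInp (l1 ++ l2)) :: h) (Some s)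
| tr_rout h l1 a s l2 : l1 ++ l2 <> [::] ->
    ctrans h (Some (CROut (l1 ++ (a, s) :: l2))) (AOut a)
           (Some (CROut (l1 ++ l2)) :: h) (Some s)
| tr_utau h l1 a s l2 : l1 ++ l2 <> [::] ->
    ctrans h (Some (CUOut (l1 ++ (a, s) :: l2))) ATau
           h (Some (CUOut [:: (a, s)]))
| tr_inp1 h a s :
    ctrans h (Some (CInp [:: (a, s)])) (AIn a) (None :: h) (Some s)
| tr_rout1 h a s :
    ctrans h (Some (CROut [:: (a, s)])) (AOut a) (None :: h) (Some s)
| tr_uout1 h a s :
    ctrans h (Some (CUOut [:: (a, s)])) (AOut a) (None :: h) (Some s)
| tr_rec h s x h' t :
    ctrans h (Some (unfold_rec s)) x h' t ->
    ctrans h (Some (CRec s)) x h' t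
| tr_rb h x t : ctrans (x :: h) t ARb h x.

Definition cstate := (history * option contract)%type.
Definition pstate := (cstate * cstate)%type.

Inductive pre_step : pstate -> pstate -> Prop :=
| st_comm dh r gh s x dh' r' gh' s' :
    is_io x -> ctrans dh r x dh' r' -> ctrans gh s (dual x) gh' s' ->
    pre_step ((dh, r), (gh, s)) ((dh', r'), (gh', s'))
| st_tau_l dh r gh s dh' r' :
    ctrans dh r ATau dh' r' ->
    pre_step ((dh, r), (gh, s)) ((dh', r'), (gh, s))
| st_tau_r dh r gh s gh' s' :
    ctrans gh s ATau gh' s' ->
    pre_step ((dh, r), (gh, s)) ((dh, r), (gh', s')).

Definition rbk_step (S S' : pstate) : Prop :=
  match S, S' with
  | ((dh, r), (gh, s)), ((dh', r'), (gh', s')) =>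
      ~ is_one_opt r /\ ctrans dh r ARb dh' r' /\ ctrans gh s ARb gh' s'
  end.

Definition step (S S' : pstate) : Prop :=
  pre_step S S' \/ ((forall S'', ~ pre_step S S'') /\ rbk_step S S').

Definition compliant (c d : cstate) : Prop :=
  forall S', clos_refl_trans pstate step (c, d) S' ->
    (forall S'', ~ step S' S'') -> is_one_opt S'.1.2.

(** Appending histories at the bottom of both stacks is invisible to the pair
    except when it lets both parties roll back past their original histories.
    Communication and tau steps only push onto the histories and do not read
    what lies below, and a roll back of the extended pair pops the original
    histories as long as they are non-empty.  So every state reachable from the
    extended pair is the extension of a state reachable from the original one,
    unless the original pair reached a state where one history was empty,
    no (comm)/(tau) step applied and the client was not 1; such a state is
    stuck, which compliance forbids. *)

From Stdlib Require Import Relations.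
From mathcomp Require Import all_boot.

Set Implicit Arguments.
Unset Strict Implicit.

Lemma ctrans_push h t x h1 t1 : ctrans h t x h1 t1 -> x <> ARb ->
  exists p, h1 = p ++ h /\ forall k, ctrans k t x (p ++ k) t1.
Proof.
elim=> {h t x h1 t1} [h l1 a s l2 nz | h l1 a s l2 nz | h l1 a s l2 nz
  | h a s | h a s | h a s | h s x h1 t1 _ IH | //] x_rb.
- by exists [:: Some (CInp (l1 ++ l2))]; split=> // k; constructor.
- by exists [:: Some (CROut (l1 ++ l2))]; split=> // k; constructor.
- by exists [::]; split=> // k; constructor.
- by exists [:: None]; split=> // k; constructor.
- by exists [:: None]; split=> // k; constructor.
- by exists [:: None]; split=> // k; constructor.
- have [p [-> tr_p]] := IH x_rb.
  by exists p; split=> // k; constructor.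
Qed.

Lemma ctrans_rbE h t h1 t1 : ctrans h t ARb h1 t1 -> h = t1 :: h1.
Proof. by move E: ARb => x tr; elim: tr E. Qed.

Lemma is_io_rb x : is_io x -> x <> ARb /\ dual x <> ARb.
Proof. by case: x. Qed.

Definition extend_hist (e f : history) (S : pstate) : pstate :=
  ((S.1.1 ++ e, S.1.2), (S.2.1 ++ f, S.2.2)).

Definition stuck (S : pstate) : Prop := forall T, ~ step S T.

Section ExtendHistory.

Variables e f : history.

Local Notation ext := (extend_hist e f).

Lemma pre_step_ext S T : pre_step S T -> pre_step (ext S) (ext T).
Proof.
have tau_rb : ATau <> ARb by [].
case=> {S T} [dh r gh s x dh' r' gh' s' io trl trr | dh r gh s dh' r' tr
  | dh r gh s gh' s' tr]; rewrite /extend_hist /=.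
- have [x_rb dx_rb] := is_io_rb io.
  have [p [-> tr_p]] := ctrans_push trl x_rb.
  have [q [-> tr_q]] := ctrans_push trr dx_rb.
  by rewrite -!catA; apply: st_comm io (tr_p _) (tr_q _).
- have [p [-> tr_p]] := ctrans_push tr tau_rb.
  by rewrite -catA; apply: st_tau_l (tr_p _).
- have [p [-> tr_p]] := ctrans_push tr tau_rb.
  by rewrite -catA; apply: st_tau_r (tr_p _).
Qed.

Lemma pre_step_extV S U : pre_step (ext S) U ->
  exists2 T, pre_step S T & U = ext T.
Proof.
have tau_rb : ATau <> ARb by [].
case: S => [[dh r] [gh s]]; rewrite /extend_hist /=.
move E: (_, _) => S0 st; case: st E => {S0 U}
  [dh0 r0 gh0 s0 x dh' r' gh' s' io trl trr | dh0 r0 gh0 s0 dh' r' tr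
  | dh0 r0 gh0 s0 gh' s' tr] [? ? ? ?]; subst dh0 r0 gh0 s0.
- have [x_rb dx_rb] := is_io_rb io.
  have [p [-> tr_p]] := ctrans_push trl x_rb.
  have [q [-> tr_q]] := ctrans_push trr dx_rb.
  exists ((p ++ dh, r'), (q ++ gh, s')).
    exact: st_comm io (tr_p _) (tr_q _).
  by rewrite /extend_hist /= !catA.
- have [p [-> tr_p]] := ctrans_push tr tau_rb.
  exists ((p ++ dh, r'), (gh, s)); first exact: st_tau_l (tr_p _).
  by rewrite /extend_hist /= catA.
- have [p [-> tr_p]] := ctrans_push tr tau_rb.
  exists ((dh, r), (p ++ gh, s')); first exact: st_tau_r (tr_p _).
  by rewrite /extend_hist /= catA.
Qed.

Lemma rbk_step_ext S T : rbk_step S T -> rbk_step (ext S) (ext T).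
Proof.
case: S T => [[dh r] [gh s]] [[dh' r'] [gh' s']] /= [not_one [trl trr]].
by rewrite (ctrans_rbE trl) (ctrans_rbE trr); do !split=> //; constructor.
Qed.

Lemma rbk_step_extV S U : rbk_step (ext S) U ->
  (exists2 T, rbk_step S T & U = ext T) \/
  ((S.1.1 = [::] \/ S.2.1 = [::]) /\ ~ is_one_opt S.1.2).
Proof.
case: S U => [[dh r] [gh s]] [[dh' r'] [gh' s']] /= [not_one [trl trr]].
move: (ctrans_rbE trl) (ctrans_rbE trr) => {trl trr}.
case: dh => [|x dh]; first by right; split; first left.
case: gh => [|y gh]; first by right; split; first right.
move=> [<- <-] [<- <-]; left; exists ((dh, x), (gh, y)) => //.
by do !split=> //; constructor.
Qed.

Lemma rbk_step_nil S T : S.1.1 = [::] \/ S.2.1 = [::] -> ~ rbk_step S T.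
Proof.
case: S T => [[dh r] [gh s]] [[dh' r'] [gh' s']] /= nil [_ [trl trr]].
by case: nil => nil; move: (ctrans_rbE trl) (ctrans_rbE trr); rewrite nil.
Qed.

Lemma step_ext S T : step S T -> step (ext S) (ext T).
Proof.
case=> [st | [no_pre rbk]]; first by left; apply: pre_step_ext.
right; split; last exact: rbk_step_ext.
by move=> U /pre_step_extV[T' /no_pre].
Qed.

Lemma stuck_ext S : stuck (ext S) -> stuck S.
Proof. by move=> stk T /step_ext /stk. Qed.

Lemma step_extV S U : step (ext S) U ->
  (exists2 T, step S T & U = ext T) \/ (stuck S /\ ~ is_one_opt S.1.2).
Proof.
have no_pre T : (forall U, ~ pre_step (ext S) U) -> ~ pre_step S T.
  by move=> no_pre' /pre_step_ext /no_pre'.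
case=> [/pre_step_extV[T st ->] | [no_pre' /rbk_step_extV]].
  by left; exists T => //; left.
case=> [[T rbk ->] | [nil not_one]].
  by left; exists T => //; right; split=> // T'; apply: no_pre.
by right; split=> // T [/(no_pre _ no_pre') | [_ /(rbk_step_nil nil)]].
Qed.

Lemma reach_extV S0 U :
  (forall S, clos_refl_trans pstate step S0 S -> stuck S -> is_one_opt S.1.2) ->
  clos_refl_trans pstate step (ext S0) U ->
  exists2 S, clos_refl_trans pstate step S0 S & U = ext S.
Proof.
move=> stuck_one reach; elim: (clos_rt_rtn1 _ _ _ _ reach) => {U reach}
  [|V U st _ [S reach_S eq_V]].
  by exists S0; first exact: rt_refl.
move: st; rewrite eq_V => /step_extV[[T st ->] | [stk not_one]].
  by exists T => //; apply: rt_trans reach_S (rt_step _ _ _ _ st).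
by case: not_one; apply: stuck_one.
Qed.

End ExtendHistory.

Theorem lemma3 (d g d' g' : history) (r s : option contract) :
  wf_hist d -> wf_hist g -> wf_hist d' -> wf_hist g' -> wf_opt r -> wf_opt s ->
  compliant (d, r) (g, s) -> compliant (d ++ d', r) (g ++ g', s).
Proof.
move=> _ _ _ _ _ _ compl U reach.
have [S reach_S ->] := reach_extV (S0 := ((d, r), (g, s))) compl reach.
by move/stuck_ext; apply: compl.
Qed.
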